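(* Let $q=2^m$ with $m\ge 2$, and let $k$ be an integer with $1\le k\le q+1$ such that $\mathcal C_{\{3,5\}}^\perp|_{\mathrm{GF}(q)}$ contains a codeword of weight $k$. Then $\mathcal B_k(\mathcal C_{\{3,5\}}^\perp|_{\mathrm{GF}(q)})$ is invariant under the action of $\mathrm{Stab}_{U_{q+1}}$. In particular, if $k>3$, the incidence structure $(U_{q+1},\mathcal B_k(\mathcal C_{\{3,5\}}^\perp|_{\mathrm{GF}(q)}))$ is a $3$-design.
   Context: $U_{q+1}$ is the set of $(q+1)$-th roots of unity in $\mathrm{GF}(q^2)$, viewed as a subset of $\mathrm{PG}(1,q^2)=\mathrm{GF}(q^2)\cup\{\infty\}$; coordinates are indexed by $U_{q+1}$. $\mathrm{Stab}_{U_{q+1}}$ is the setwise stabilizer of $U_{q+1}$ in $\mathrm{PGL}_2(\mathrm{GF}(q^2))$ acting by linear fractional transformations. $\mathcal C_{\{3,5\}}=\{(a_3u^3+a_{q-2}u^{q-2}+a_5u^5+a_{q-4}u^{q-4})_{u\in U_{q+1}}: a_i\in\mathrm{GF}(q^2)\}$, $\mathcal C_{\{3,5\}}^\perp$ its dual under the standard inner product, and $\mathcal C^\perp_{\{3,5\}}|_{\mathrm{GF}(q)}=\mathcal C^\perp_{\{3,5\}}\cap\mathrm{GF}(q)^{q+1}$. $\mathcal B_k(\mathcal C)$ is the set of supports of codewords of Hamming weight $k$; invariance means $\pi(B)\in\mathcal B_k$ for all blocks $B$ and all $\pi\in \mathrm{Stab}_{U_{q+1}}$. A $3$-design: every $3$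 points lie in the same positive number of blocks. *)

From HB Require Import structures.
From mathcomp Require Import all_boot all_algebra all_field.
Set Implicit Arguments. Unset Strict Implicit. Unset Printing Implicit Defensive.
Import GRing.Theory.
Local Open Scope ring_scope.

(* F plays the role of GF(q^2); q is given explicitly. *)

Definition Uq (F : finFieldType) (q : nat) := {x : F | x ^+ q.+1 == 1}.

Definition inC35 (F : finFieldType) (q : nat) (c : {ffun Uq F q -> F}) : bool :=
  [exists a : (F * F) * (F * F),
     [forall u : Uq F q,
        c u == a.1.1 * (val u) ^+ 3 + a.1.2 * (val u) ^+ (q - 2)%N
               + a.2.1 * (val u) ^+ 5 + a.2.2 * (val u) ^+ (q - 4)%N]].

Definition inC35dual (F : finFieldType) (q : nat) (v : {ffun Uq F q -> F}) : bool :=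
  [forall w : {ffun Uq F q -> F}, inC35 w ==> (\sum_u w u * v u == 0)].

(* Subfield subcode: codewords of the dual with all coordinates in GF(q) = {x | x^q = x}. *)
Definition inC35dual_GFq (F : finFieldType) (q : nat) (v : {ffun Uq F q -> F}) : bool :=
  inC35dual v && [forall u, v u ^+ q == v u].

Definition supp (F : finFieldType) (q : nat) (v : {ffun Uq F q -> F}) : {set Uq F q} :=
  [set u | v u != 0].

Definition wt (F : finFieldType) (q : nat) (v : {ffun Uq F q -> F}) : nat := #|supp v|.

Definition Bk (F : finFieldType) (q k : nat) : {set {set Uq F q}} :=
  [set S | [exists v : {ffun Uq F q -> F}, [&& inC35dual_GFq v, wt v == k & supp v == S]]].

(* PG(1, F) = F u {oo}, with None = oo; linear fractional transformation of (a b; c d). *)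
Definition lft (F : finFieldType) (a b c d : F) (z : option F) : option F :=
  match z with
  | Some x => if c * x + d == 0 then None else Some ((a * x + b) / (c * x + d))
  | None => if c == 0 then None else Some (a / c)
  end.

(* (a b; c d) represents an element of PGL_2(F) stabilizing U_{q+1} setwise. *)
Definition inStab (F : finFieldType) (q : nat) (a b c d : F) : bool :=
  (a * d - b * c != 0) &&
  ([set lft a b c d (Some (val u)) | u : Uq F q] == [set Some (val u) | u : Uq F q]).

Definition imB (F : finFieldType) (q : nat) (a b c d : F) (B : {set Uq F q}) : {set Uq F q} :=
  [set u' : Uq F q | Some (val u') \in [set lft a b c d (Some (val u)) | u in B]].

Definition is_t_design (T : finType) (t : nat) (Bs : {set {set T}}) : Prop :=
  exists2 lam : nat, (0 < lam)%N &
    forall P : {set T}, #|P| = t -> #|[set B in Bs | P \subset B]| = lam.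

From HB Require Import structures.
From mathcomp Require Import all_boot all_algebra all_field.
From mathcomp Require Import ring zify.
Set Implicit Arguments. Unset Strict Implicit. Unset Printing Implicit Defensive.
Import GRing.Theory.
Local Open Scope ring_scope.

(* Since u^(q-2) = u^-3 and u^(q-4) = u^-5 on U = U_(q+1), a vector lies in the dual
   code iff it is orthogonal to the Laurent polynomials in u^3, u^-3, u^5, u^-5.
   Let s(x) = (ax+b)/(cx+d) stabilise U.  Comparing coefficients in
   (ax+b)^(q+1) = (cx+d)^(q+1) on U gives d^q b = c^q a, which forces the values of
   r(u) = (rho u / rho 1)^5, rho x = (ax+b)(cx+d)/x, to lie in GF(q).  In
   characteristic 2, (ax+b)^8 = a^8 x^8 + b^8 and (cx+d)^2 = c^2 x^2 + d^2, so
   r(u) s(u)^(+-3) and r(u) s(u)^(+-5) are again such Laurent polynomials in u; hence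
   v |-> (r v) o s^-1 maps the weight-k words of the subfield subcode to
   weight-k words with support s(supp v).
   The stabiliser is moreover 3-transitive: for distinct x1, x2, x3 in U the map
   x |-> (x2+x3)(x+x1) / ((x2+x1)(x+x3)) sends U into GF(q) u {oo} and x1, x2, x3
   to 0, 1, oo, while for w outside GF(q) the map z |-> (z + w^q) / (z + w) sends
   GF(q) u {oo} back into U.  So every 3-subset of U lies in the same number of
   blocks as a fixed one. *)

Section Designs.
Variables (T : finType) (Bs : {set {set T}}).

Lemma exists_subset_card (A : {set T}) n :
  (n <= #|A|)%N -> exists2 P : {set T}, P \subset A & #|P| = n.
Proof.
move=> le_nA; exists [set x in take n (enum A)].
  by apply/subsetP => x; rewrite inE => /mem_take; rewrite mem_enum.
rewrite cardsE; have /card_uniqP -> : uniq (take n (enum A)) by apply/take_uniq/enum_uniq.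
by rewrite size_take -cardE ltn_neqAle le_nA andbT; case: eqP.
Qed.

Lemma card_blocks_through_imset (f : T -> T) (P : {set T}) :
    injective f -> {in Bs, forall B : {set T}, f @: B \in Bs} ->
  #|[set B in Bs | f @: P \subset B]| = #|[set B in Bs | P \subset B]|.
Proof.
move=> f_inj f_Bs; have imf_inj := imset_inj f_inj.
have imf_Bs : [set f @: B | B : {set T} in Bs] = Bs.
  apply/eqP; rewrite eqEcard card_imset // leqnn andbT.
  by apply/subsetP => _ /imsetP[B B_Bs ->]; apply: f_Bs.
rewrite -[RHS](card_imset _ imf_inj); apply: eq_card => B'.
rewrite [LHS]inE; apply/andP/imsetP => [[] | [B]].
  rewrite -{1}imf_Bs => /imsetP[B B_Bs ->] sPB; exists B => //.
  rewrite inE B_Bs; apply/subsetP => x Px.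
  by rewrite -(mem_imset _ _ f_inj) (subsetP sPB) ?imset_f.
by rewrite inE => /andP[B_Bs sPB] ->; rewrite f_Bs // imsetS.
Qed.

Lemma t_design_of_transitive t (P0 : {set T}) :
    (exists2 B, B \in Bs & (t <= #|B|)%N) ->
    (forall P : {set T}, #|P| = t -> exists2 f : T -> T, injective f &
       f @: P = P0 /\ {in Bs, forall B : {set T}, f @: B \in Bs}) ->
  is_t_design t Bs.
Proof.
move=> [B B_Bs le_tB] move_to_P0.
pose lam (P : {set T}) := #|[set B in Bs | P \subset B]|.
have lamE (P : {set T}) : #|P| = t -> lam P = lam P0.
  move=> cardP; have [f f_inj [<- f_Bs]] := move_to_P0 P cardP.
  by rewrite /lam card_blocks_through_imset.
exists (lam P0) => //.
have [P sPB cardP] := exists_subset_card le_tB.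
by rewrite -(lamE P cardP); apply/card_gt0P; exists B; rewrite inE B_Bs.
Qed.

Lemma cards3P (A : {set T}) : #|A| = 3 ->
  exists x y z, [/\ x != y, x != z, y != z & A = [set x; y; z]].
Proof.
move=> cardA; have [x Ax] : exists x, x \in A by apply/card_gt0P; rewrite cardA.
have /cards2P[y [z [yz Axyz]]] : #|A :\ x| == 2.
  by move: cardA; rewrite (cardsD1 x) Ax add1n => -[->].
have : x \notin A :\ x by rewrite !inE eqxx.
rewrite Axyz !inE negb_or => /andP[xy xz]; exists x, y, z; split => //.
by rewrite -(setD1K Ax) Axyz setUA.
Qed.

End Designs.

Definition laurent35 (F : fieldType) (e : (F * F) * (F * F)) (x : F) : F :=
  e.1.1 * x ^+ 3 + e.1.2 * x^-1 ^+ 3 + e.2.1 * x ^+ 5 + e.2.2 * x^-1 ^+ 5.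

(* [twist35 a b c d e] lists, in the basis of [laurent35], the coefficients of
   (e.1.1 X^8 Y^2 + e.1.2 Y^8 X^2 + e.2.1 X^8 X^2 + e.2.2 Y^8 Y^2) / x^5 with
   X = a x + b and Y = c x + d; [f A B C D] is the corresponding coefficient of
   (A^8 x^8 + B^8) (C^2 x^2 + D^2) / x^5. *)
Definition twist35 (F : fieldType) (a b c d : F) (e : (F * F) * (F * F)) :=
  let comb f := e.1.1 * f a b c d + e.1.2 * f c d a b + e.2.1 * f a b a b
                + e.2.2 * f c d c d in
  ((comb (fun A B C D => A ^+ 8 * D ^+ 2), comb (fun A B C D => B ^+ 8 * C ^+ 2)),
   (comb (fun A B C D => A ^+ 8 * C ^+ 2), comb (fun A B C D => B ^+ 8 * D ^+ 2))).

Section CharTwo.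
Variables (F : fieldType).
Hypothesis F2 : 2%N \in [pchar F].

Lemma exprD2n_pchar2 n (x y : F) : (x + y) ^+ (2 ^ n) = x ^+ (2 ^ n) + y ^+ (2 ^ n).
Proof. by apply: exprDn_pchar; rewrite (eq_pnat _ (pcharf_eq F2)) pnatX. Qed.

Lemma addr_eq0_pchar2 (x y : F) : (x + y == 0) = (x == y).
Proof. by rewrite addr_eq0 (oppr_pchar2 F2). Qed.

Lemma laurent35_twist a b c d e (x : F) :
    x != 0 -> a * x + b != 0 -> c * x + d != 0 ->
  ((a * x + b) * (c * x + d) / x) ^+ 5 * laurent35 e ((a * x + b) / (c * x + d))
  = laurent35 (twist35 a b c d e) x.
Proof.
have frob8 A B : (A * x + B) ^+ 8 = A ^+ 8 * x ^+ 8 + B ^+ 8.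
  by rewrite (exprD2n_pchar2 3) exprMn.
have frob2 A B : (A * x + B) ^+ 2 = A ^+ 2 * x ^+ 2 + B ^+ 2.
  by rewrite (exprD2n_pchar2 1) exprMn.
move=> x0 X0 Y0; rewrite /laurent35 /twist35 /=.
transitivity (x^-1 ^+ 5 * (e.1.1 * ((a * x + b) ^+ 8 * (c * x + d) ^+ 2)
  + e.1.2 * ((c * x + d) ^+ 8 * (a * x + b) ^+ 2)
  + e.2.1 * ((a * x + b) ^+ 8 * (a * x + b) ^+ 2)
  + e.2.2 * ((c * x + d) ^+ 8 * (c * x + d) ^+ 2))).
  by field; rewrite x0 Y0 X0.
by rewrite !frob8 !frob2; field.
Qed.

End CharTwo.

Section RootsOfUnity.
Variables (F : fieldType) (q : nat) (x : F).
Hypothesis x_unity : x ^+ q.+1 = 1.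

Lemma unity_neq0 : x != 0.
Proof. by apply: contra_eq_neq x_unity => ->; rewrite expr0n eq_sym oner_neq0. Qed.

Lemma unity_expB j : (j <= q)%N -> x ^+ (q - j) = x^-1 ^+ j.+1.
Proof.
move=> le_jq; have x0 := unity_neq0.
apply: (mulIf (expf_neq0 j.+1 x0)).
by rewrite -exprMn mulVf // expr1n -exprD addnS subnK.
Qed.

Lemma unity_expq : x ^+ q = x^-1.
Proof. by rewrite -(subn0 q) unity_expB. Qed.

End RootsOfUnity.

Lemma Uq_unity (F : finFieldType) (q : nat) (u : Uq F q) : val u ^+ q.+1 = 1.
Proof. exact/eqP/(valP u). Qed.

Section QuadraticExtension.
Variables (F : finFieldType) (q : nat).
Hypotheses (q_gt1 : (1 < q)%N) (cardF : #|F| = (q ^ 2)%N).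

Lemma expq_involutive (x : F) : (x ^+ q) ^+ q = x.
Proof. by rewrite -exprM mulnn -cardF expf_card. Qed.

Lemma expq1_unity (y : F) : y != 0 -> (y ^+ (q - 1)) ^+ q.+1 = 1.
Proof.
move=> y0; apply: (mulIf y0); rewrite mul1r -exprM -exprSr.
have -> : ((q - 1) * q.+1).+1 = #|F| by rewrite cardF; nia.
exact: expf_card.
Qed.

Lemma quadratic_unity_eq0 (e2 e1 e0 : F) :
    (forall x : F, x ^+ q.+1 = 1 -> e2 * x ^+ 2 + e1 * x + e0 = 0) ->
  [/\ e2 = 0, e1 = 0 & e0 = 0].
Proof.
move=> vanish.
pose p : {poly F} := e2 *: 'X^((q - 1) * 2) + e1 *: 'X^(q - 1) + e0%:P.
have p0 : p = 0.
  apply: (@roots_geq_poly_eq0 _ p (enum (predC1 0))); last 1 first.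
  - rewrite -cardE cardC1 cardF; apply: leq_trans (size_polyD _ _) _.
    rewrite geq_max size_polyC (leq_trans (leq_b1 _)) ?andbT; last nia.
    apply: leq_trans (size_polyD _ _) _.
    by rewrite geq_max !(leq_trans (size_scale_leq _ _)) // !size_polyXn; nia.
  - apply/allP => y; rewrite mem_enum /= => y0.
    by rewrite /root /p !hornerE -(vanish _ (expq1_unity y0)) exprM.
  - exact: enum_uniq.
have coef_p i : p`_i =
    e2 * (i == (q - 1) * 2)%N%:R + e1 * (i == q - 1)%N%:R + e0 * (i == 0)%N%:R.
  by rewrite /p !coefD !coefZ !coefXn coefC; case: (i == 0%N); rewrite ?mulr1 ?mulr0.
have := coef_p ((q - 1) * 2)%N; have := coef_p (q - 1)%N; have := coef_p 0%N.
rewrite p0 !coef0 !eqxx; do 6!(case: eqP => [?|_]; first lia).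
by rewrite /= !mulr0 !mulr1 ?addr0 ?add0r => <- <- <-.
Qed.

Lemma exists_notin_subfield : exists w : F, w ^+ q != w.
Proof.
apply/existsP; apply: contraT; rewrite negb_exists => /forallP /= fixed.
pose p : {poly F} := 'X^q - 'X.
have : p = 0.
  apply: (@roots_geq_poly_eq0 _ p (enum F)).
  - by apply/allP => y _; rewrite /root /p !hornerE subr_eq0 -[_ == _]negbK fixed.
  - exact: enum_uniq.
  rewrite -cardE cardF size_polyDl ?size_polyXn ?size_polyN ?size_polyX; nia.
move/(congr1 (fun r : {poly F} => r`_q)); rewrite coef0 /p coefB coefXn coefX eqxx.
by case: eqP => [|_]; [lia | rewrite subr0 => /eqP; rewrite oner_eq0].
Qed.

End QuadraticExtension.

Section Code35.
Variables (F : finFieldType) (q : nat).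
Hypothesis q_ge4 : (4 <= q)%N.
Local Notation U := (Uq F q).

Lemma inC35P (w : {ffun U -> F}) :
  reflect (exists e, forall u, w u = laurent35 e (val u)) (inC35 w).
Proof.
have inv_exp (u : U) j : (j <= 4)%N -> val u ^+ (q - j) = (val u)^-1 ^+ j.+1.
  by move=> le_j4; rewrite unity_expB ?Uq_unity //; lia.
apply: (iffP existsP) => -[e we]; exists e.
  by move=> u; rewrite (eqP (forallP we u)) /laurent35 !inv_exp.
by apply/forallP => u; rewrite we /laurent35 !inv_exp.
Qed.

Lemma inC35dualP (v : {ffun U -> F}) :
  reflect (forall e, \sum_u laurent35 e (val u) * v u = 0) (inC35dual v).
Proof.
apply: (iffP forallP) => [orth e | orth w].
  have /implyP/(_ _)/eqP := orth [ffun u => laurent35 e (val u)].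
  by under eq_bigr do rewrite ffunE; apply; apply/inC35P; exists e => u; rewrite ffunE.
apply/implyP => /inC35P[e we]; apply/eqP.
by under eq_bigr do rewrite we; apply: orth.
Qed.

End Code35.

Definition maps_unity (F : fieldType) (q : nat) (a b c d : F) :=
  forall x : F, x ^+ q.+1 = 1 ->
  c * x + d != 0 /\ ((a * x + b) / (c * x + d)) ^+ q.+1 = 1.

Lemma inStab_maps_unity (F : finFieldType) (q : nat) (a b c d : F) :
  inStab q a b c d -> maps_unity q a b c d.
Proof.
case/andP=> _ /eqP stabU x x_unity.
pose u : Uq F q := exist (fun x : F => x ^+ q.+1 == 1) x (introT eqP x_unity).
have : lft a b c d (Some x) \in [set Some (val u) | u : Uq F q].
  by rewrite -stabU; apply/imsetP; exists u.
case/imsetP => u' _; rewrite /lft; case: eqP => [// | /eqP Y0 [->]].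
by split; last exact: Uq_unity.
Qed.

Section MoebiusUnity.
Variables (F : finFieldType) (q : nat) (a b c d : F).
Hypotheses (det_neq0 : a * d - b * c != 0) (mapsU : maps_unity q a b c d).
Local Notation U := (Uq F q).

Lemma moeb_denom_neq0 x : x ^+ q.+1 = 1 -> c * x + d != 0.
Proof. by case/mapsU. Qed.

Lemma moeb_numer_neq0 x : x ^+ q.+1 = 1 -> a * x + b != 0.
Proof.
by case/mapsU=> _ /unity_neq0; apply: contraNneq => ->; rewrite mul0r.
Qed.

Lemma moeb_norm x : x ^+ q.+1 = 1 -> (a * x + b) ^+ q.+1 = (c * x + d) ^+ q.+1.
Proof.
by case/mapsU=> Y0 unity; rewrite -[a * x + b](divfK Y0) exprMn unity mul1r.
Qed.

Lemma moeb_unity (u : U) : ((a * val u + b) / (c * val u + d)) ^+ q.+1 == 1.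
Proof. by apply/eqP; case: (mapsU (Uq_unity u)). Qed.

Definition moebU (u : U) : U := exist (fun x : F => x ^+ q.+1 == 1) _ (moeb_unity u).

Lemma moebU_inj : injective moebU.
Proof.
move=> u u' /(congr1 val) /= eq_im; apply: val_inj.
have Y0 := moeb_denom_neq0 (Uq_unity u); have Y0' := moeb_denom_neq0 (Uq_unity u').
have : (a * d - b * c) * (val u - val u') = 0.
  move/eqP: eq_im; rewrite eqr_div // => /eqP cross.
  have -> : (a * d - b * c) * (val u - val u') = (a * val u + b) * (c * val u' + d)
    - (a * val u' + b) * (c * val u + d) by ring.
  by rewrite cross subrr.
by move/eqP; rewrite mulf_eq0 (negbTE det_neq0) subr_eq0 => /eqP.
Qed.

Lemma imB_moebU (B : {set U}) : imB a b c d B = moebU @: B.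
Proof.
have lftE (u : U) : lft a b c d (Some (val u)) = Some (val (moebU u)).
  by rewrite /= (negbTE (moeb_denom_neq0 (Uq_unity u))).
apply/setP => u'; rewrite inE; apply/imsetP/imsetP => -[u uB].
  by rewrite lftE => -[eq_val]; exists u => //; apply: val_inj.
by move=> ->; exists u; rewrite ?lftE.
Qed.

End MoebiusUnity.

Section EvenQuadraticExtension.
Variables (m : nat) (F : finFieldType).
Hypotheses (m_ge2 : (2 <= m)%N) (cardF : #|F| = ((2 ^ m) ^ 2)%N).
Local Notation q := (2 ^ m)%N.
Local Notation U := (Uq F q).

Lemma pchar2F : 2%N \in [pchar F].
Proof. by apply: (@card_finPcharP _ 2 (m * 2)); rewrite // cardF expnM. Qed.

Lemma q_ge4 : (4 <= q)%N.
Proof. by rewrite -[4%N]/(2 ^ 2)%N leq_pexp2l. Qed.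

Lemma q_gt1 : (1 < q)%N.
Proof. exact: leq_trans q_ge4. Qed.

Lemma exprDq (x y : F) : (x + y) ^+ q = x ^+ q + y ^+ q.
Proof. exact: exprD2n_pchar2 pchar2F m x y. Qed.

Lemma exprDq_unity (s t : F) : s ^+ q.+1 = 1 -> t ^+ q.+1 = 1 ->
  (s + t) ^+ q = (s + t) / (s * t).
Proof.
move=> s_unity t_unity; have s0 := unity_neq0 s_unity; have t0 := unity_neq0 t_unity.
by rewrite exprDq (unity_expq s_unity) (unity_expq t_unity); field; rewrite s0 t0.
Qed.

Lemma cayley_norm (X Y w : F) : X * Y ^+ q = X ^+ q * Y ->
  (X + w ^+ q * Y) ^+ q.+1 = (X + w * Y) ^+ q.+1.
Proof.
move=> XY; rewrite !exprS !exprDq !exprMn (expq_involutive cardF).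
apply/eqP; rewrite -subr_eq0; apply/eqP.
transitivity ((w - w ^+ q) * (X * Y ^+ q - X ^+ q * Y)); first by ring.
by rewrite XY subrr mulr0.
Qed.

Lemma cayley_denom_neq0 (X Y w : F) : w ^+ q != w -> X * Y ^+ q = X ^+ q * Y ->
  (X != 0) || (Y != 0) -> X + w * Y != 0.
Proof.
move=> w_notGFq XY XY0; apply: contra w_notGFq => /eqP sum0.
have X_wY : X = w * Y.
  by apply/eqP; rewrite -(oppr_pchar2 pchar2F (w * Y)) -addr_eq0 sum0.
have Y0 : Y != 0 by apply: contraTneq XY0 => Y0; rewrite X_wY Y0 mulr0 eqxx.
have -> : w = X / Y by rewrite X_wY mulfK.
by rewrite expr_div_n eqr_div ?expf_neq0 // XY.
Qed.

Section Transport.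
Variables a b c d : F.
Hypotheses (det_neq0 : a * d - b * c != 0) (mapsU : maps_unity q a b c d).

Lemma stabU_coef_rel : d ^+ q * b = c ^+ q * a.
Proof.
have [rel2 rel1 rel0] : [/\ a * b ^+ q - c * d ^+ q = 0,
    a * a ^+ q + b * b ^+ q - c * c ^+ q - d * d ^+ q = 0
  & a ^+ q * b - c ^+ q * d = 0].
  apply: (quadratic_unity_eq0 q_gt1 cardF) => x x_unity; have x0 := unity_neq0 x_unity.
  have := moeb_norm mapsU x_unity; rewrite !exprS !exprDq !exprMn (unity_expq x_unity).
  move=> norm; transitivity (x * ((a * x + b) * (a ^+ q * x^-1 + b ^+ q)
    - (c * x + d) * (c ^+ q * x^-1 + d ^+ q))).
    by field.
  by rewrite norm subrr mulr0.
have : (d ^+ q * b - c ^+ q * a) * (a * d - b * c) = 0.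
  transitivity (- (a * b) * (a * a ^+ q + b * b ^+ q - c * c ^+ q - d * d ^+ q)
     + a ^+ 2 * (a ^+ q * b - c ^+ q * d) + b ^+ 2 * (a * b ^+ q - c * d ^+ q)).
    by ring.
  by rewrite rel2 rel1 rel0 !mulr0 !addr0.
by move/eqP; rewrite mulf_eq0 (negbTE det_neq0) orbF subr_eq0 => /eqP.
Qed.

Definition rho (x : F) : F := (a * x + b) * (c * x + d) / x.

Lemma rho_neq0 x : x ^+ q.+1 = 1 -> rho x != 0.
Proof.
move=> x_unity; rewrite /rho !mulf_neq0 ?invr_eq0 ?(unity_neq0 x_unity) //.
  exact (moeb_numer_neq0 mapsU x_unity).
exact (moeb_denom_neq0 mapsU x_unity).
Qed.

Lemma rho_expq x : x ^+ q.+1 = 1 -> rho x ^+ q = ((c ^+ q + d ^+ q) / (a + b)) ^+ 2 * rho x.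
Proof.
move=> x_unity; have x0 := unity_neq0 x_unity.
have X0 := moeb_numer_neq0 mapsU x_unity.
have := moeb_numer_neq0 mapsU (expr1n F q.+1); rewrite mulr1 => X10.
have Yq : (c * x + d) ^+ q = c ^+ q * x^-1 + d ^+ q.
  by rewrite exprDq exprMn (unity_expq x_unity).
have Xq : (a * x + b) ^+ q = (c * x + d) * (c * x + d) ^+ q / (a * x + b).
  by rewrite -exprS -(moeb_norm mapsU x_unity) exprS mulrAC (divff X0) mul1r.
have kappa : (c ^+ q + d ^+ q) / (a + b) = (c ^+ q + d ^+ q * x) / (a * x + b).
  apply/eqP; rewrite eqr_div // -subr_eq0; apply/eqP.
  transitivity ((x - 1) * (c ^+ q * a - d ^+ q * b)).
    by ring.
  by rewrite stabU_coef_rel subrr mulr0.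
rewrite kappa /rho expr_div_n !exprMn (unity_expq x_unity) Xq Yq.
by field; rewrite x0 X0 oner_neq0.
Qed.

Lemma rho_ratio_GFq x : x ^+ q.+1 = 1 -> (rho x / rho 1) ^+ q = rho x / rho 1.
Proof.
move=> x_unity; have one_unity := expr1n F q.+1.
have k0 : ((c ^+ q + d ^+ q) / (a + b)) ^+ 2 != 0.
  have := expf_neq0 q (rho_neq0 one_unity).
  by rewrite (rho_expq one_unity) mulf_eq0 negb_or => /andP[].
by rewrite expr_div_n (rho_expq x_unity) (rho_expq one_unity) invfM mulrACA divff ?mul1r.
Qed.

Local Notation moeb_inj := (moebU_inj det_neq0 (mapsU := mapsU)).

Definition moeb_scale (u : U) : F := (rho (val u) / rho 1) ^+ 5.

Definition moeb_transport (v : {ffun U -> F}) : {ffun U -> F} :=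
  [ffun u' => v (invF moeb_inj u') * moeb_scale (invF moeb_inj u')].

Lemma moeb_transportE (v : {ffun U -> F}) (u : U) :
  moeb_transport v (moebU mapsU u) = v u * moeb_scale u.
Proof. by rewrite ffunE invF_f. Qed.

Lemma moeb_scale_neq0 (u : U) : moeb_scale u != 0.
Proof.
have one_unity := expr1n F q.+1.
by rewrite expf_neq0 // mulf_neq0 ?invr_eq0 ?rho_neq0 ?Uq_unity.
Qed.

Lemma supp_moeb_transport (v : {ffun U -> F}) :
  supp (moeb_transport v) = moebU mapsU @: supp v.
Proof.
apply/setP => u'; rewrite -(f_invF moeb_inj u') (mem_imset _ _ moeb_inj) /supp !inE.
by rewrite moeb_transportE mulf_eq0 negb_or moeb_scale_neq0 andbT.
Qed.

Lemma moeb_transport_GFq (v : {ffun U -> F}) : [forall u, v u ^+ q == v u] ->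
  [forall u, moeb_transport v u ^+ q == moeb_transport v u].
Proof.
move/forallP=> v_GFq; apply/forallP => u'; rewrite -(f_invF moeb_inj u').
rewrite moeb_transportE exprMn (eqP (v_GFq _)) /moeb_scale -exprM mulnC exprM.
by rewrite rho_ratio_GFq ?Uq_unity.
Qed.

Lemma inC35dual_moeb_transport (v : {ffun U -> F}) :
  inC35dual v -> inC35dual (moeb_transport v).
Proof.
move/(inC35dualP q_ge4) => v_orth; apply/(inC35dualP q_ge4) => e.
rewrite (reindex_inj moeb_inj) /=.
have twist u : laurent35 e (val (moebU mapsU u)) * moeb_transport v (moebU mapsU u)
    = (rho 1)^-5 * (laurent35 (twist35 a b c d e) (val u) * v u).
  have x_unity := Uq_unity u; have x0 := unity_neq0 x_unity.
  have X0 := moeb_numer_neq0 mapsU x_unity; have Y0 := moeb_denom_neq0 mapsU x_unity.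
  rewrite -(laurent35_twist pchar2F e x0 X0 Y0) -/(rho _) moeb_transportE.
  by rewrite /moeb_scale expr_div_n /=; ring.
by rewrite (eq_bigr _ (fun u _ => twist u)) -mulr_sumr v_orth mulr0.
Qed.

Lemma Bk_moebU k (B : {set U}) : B \in Bk F q k -> moebU mapsU @: B \in Bk F q k.
Proof.
rewrite !inE => /existsP[v /and3P[/andP[v_dual v_GFq] /eqP wt_v /eqP supp_v]].
apply/existsP; exists (moeb_transport v).
rewrite /inC35dual_GFq inC35dual_moeb_transport // moeb_transport_GFq // /wt.
by rewrite supp_moeb_transport (card_imset _ moeb_inj) supp_v -wt_v -supp_v !eqxx.
Qed.

End Transport.

Definition triple0 (w : F) : {set U} :=
  [set u : U | val u \in [:: w ^+ q / w; (1 + w ^+ q) / (1 + w); 1]].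

Section MoveTriple.
Variables (w x1 x2 x3 : F).
Hypothesis w_notGFq : w ^+ q != w.
Hypotheses (x1_unity : x1 ^+ q.+1 = 1) (x2_unity : x2 ^+ q.+1 = 1) (x3_unity : x3 ^+ q.+1 = 1).
Hypotheses (x12 : x1 != x2) (x13 : x1 != x3) (x23 : x2 != x3).

Let X x := (x2 + x3) * (x + x1).
Let Y x := (x2 + x1) * (x + x3).

(* The composite of x |-> X x / Y x and z |-> (z + w^q) / (z + w). *)
Definition triple_a := (x2 + x3) + w ^+ q * (x2 + x1).
Definition triple_b := (x2 + x3) * x1 + w ^+ q * (x2 + x1) * x3.
Definition triple_c := (x2 + x3) + w * (x2 + x1).
Definition triple_d := (x2 + x3) * x1 + w * (x2 + x1) * x3.

Lemma triple_numerE x : triple_a * x + triple_b = X x + w ^+ q * Y x.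
Proof. by rewrite /triple_a /triple_b /X /Y; ring. Qed.

Lemma triple_denomE x : triple_c * x + triple_d = X x + w * Y x.
Proof. by rewrite /triple_c /triple_d /X /Y; ring. Qed.

Lemma triple_cayley_rel x : x ^+ q.+1 = 1 -> X x * Y x ^+ q = X x ^+ q * Y x.
Proof.
move=> x_unity; have x0 := unity_neq0 x_unity; have x10 := unity_neq0 x1_unity.
have x20 := unity_neq0 x2_unity; have x30 := unity_neq0 x3_unity.
rewrite /X /Y !exprMn (exprDq_unity x2_unity x3_unity) (exprDq_unity x_unity x1_unity).
rewrite (exprDq_unity x2_unity x1_unity) (exprDq_unity x_unity x3_unity).
by field; rewrite x0 x10 x20 x30.
Qed.

Lemma triple_det : triple_a * triple_d - triple_b * triple_c != 0.
Proof.
have -> : triple_a * triple_d - triple_b * triple_c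
    = (x2 + x3) * (x2 + x1) * (x3 - x1) * (w - w ^+ q).
  by rewrite /triple_a /triple_b /triple_c /triple_d; ring.
by rewrite !mulf_neq0 ?subr_eq0 ?(addr_eq0_pchar2 pchar2F) // eq_sym.
Qed.

Lemma triple_maps_unity : maps_unity q triple_a triple_b triple_c triple_d.
Proof.
move=> x x_unity; rewrite triple_numerE triple_denomE.
have D0 : X x + w * Y x != 0.
  apply: cayley_denom_neq0 w_notGFq (triple_cayley_rel x_unity) _.
  have [-> | xx1] := eqVneq x x1; apply/orP; [right | left].
    by rewrite /Y mulf_neq0 ?(addr_eq0_pchar2 pchar2F) // eq_sym.
  by rewrite /X mulf_neq0 ?(addr_eq0_pchar2 pchar2F).
split=> //.
by rewrite expr_div_n cayley_norm ?triple_cayley_rel // divff // expf_neq0.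
Qed.

Lemma triple_moeb1 :
  (triple_a * x1 + triple_b) / (triple_c * x1 + triple_d) = w ^+ q / w.
Proof.
have Y0 : Y x1 != 0.
  by rewrite /Y mulf_neq0 ?(addr_eq0_pchar2 pchar2F) // eq_sym.
have w0 : w != 0 by apply: contraNneq w_notGFq => ->; rewrite expr0n expn_eq0.
rewrite triple_numerE triple_denomE /X (addrr_pchar2 pchar2F) mulr0 !add0r.
by rewrite invfM mulrACA divff // mulr1.
Qed.

Lemma triple_moeb2 :
  (triple_a * x2 + triple_b) / (triple_c * x2 + triple_d) = (1 + w ^+ q) / (1 + w).
Proof.
have XY : X x2 = Y x2 by rewrite /X /Y mulrC addrC [x2 + x3]addrC.
have Y0 : Y x2 != 0.
  by rewrite /Y mulf_neq0 ?(addr_eq0_pchar2 pchar2F) // eq_sym.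
have factor z : Y x2 + z * Y x2 = (1 + z) * Y x2 by rewrite mulrDl mul1r.
rewrite triple_numerE triple_denomE XY !factor.
by rewrite invfM mulrACA divff // mulr1.
Qed.

Lemma triple_moeb3 :
  (triple_a * x3 + triple_b) / (triple_c * x3 + triple_d) = 1.
Proof.
have X0 : X x3 != 0 by rewrite /X mulf_neq0 ?(addr_eq0_pchar2 pchar2F) // eq_sym.
by rewrite triple_numerE triple_denomE /Y (addrr_pchar2 pchar2F) !mulr0 !addr0 divff.
Qed.

Lemma triple_move : exists a b c d, [/\ a * d - b * c != 0, maps_unity q a b c d &
  [/\ (a * x1 + b) / (c * x1 + d) = w ^+ q / w,
      (a * x2 + b) / (c * x2 + d) = (1 + w ^+ q) / (1 + w)
    & (a * x3 + b) / (c * x3 + d) = 1]].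
Proof.
exists triple_a, triple_b, triple_c, triple_d.
split; first exact: triple_det; first exact: triple_maps_unity.
by split; [exact: triple_moeb1 | exact: triple_moeb2 | exact: triple_moeb3].
Qed.

End MoveTriple.

Lemma Bk_move_triple w k (P : {set U}) : w ^+ q != w -> #|P| = 3 ->
  exists2 f : U -> U, injective f &
    f @: P = triple0 w /\ {in Bk F q k, forall B : {set U}, f @: B \in Bk F q k}.
Proof.
move=> w_notGFq /cards3P[u1 [u2 [u3 [u12 u13 u23 ->]]]].
have [a [b [c [d [det_neq0 mapsU [im1 im2 im3]]]]]] := triple_move w_notGFq
  (Uq_unity u1) (Uq_unity u2) (Uq_unity u3)
  (u12 : val u1 != val u2) (u13 : val u1 != val u3) (u23 : val u2 != val u3).
exists (moebU mapsU); first exact: moebU_inj det_neq0 mapsU.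
split; last exact: Bk_moebU det_neq0 mapsU k.
apply/setP => u; rewrite !imsetU !imset_set1 !inE -!val_eqE /= im1 im2 im3.
by rewrite orbA.
Qed.

End EvenQuadraticExtension.

Theorem theorem24 (m : nat) (F : finFieldType) (k : nat) :
  (2 <= m)%N ->
  #|F| = ((2 ^ m) ^ 2)%N ->
  (1 <= k <= (2 ^ m).+1)%N ->
  (exists v : {ffun Uq F (2 ^ m) -> F}, inC35dual_GFq v /\ wt v = k) ->
  (forall (a b c d : F), inStab (2 ^ m) a b c d ->
     forall B, B \in Bk F (2 ^ m) k -> imB a b c d B \in Bk F (2 ^ m) k)
  /\ ((3 < k)%N -> is_t_design 3 (Bk F (2 ^ m) k)).
Proof.
move=> m_ge2 cardF _ [v [v_code wt_v]].
split=> [a b c d stab B B_Bk | lt3k].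
  have [det_neq0 _] := andP stab; have mapsU := inStab_maps_unity stab.
  rewrite imB_moebU; exact (Bk_moebU m_ge2 cardF det_neq0 mapsU B_Bk).
have [w w_notGFq] := exists_notin_subfield (q_gt1 m_ge2) cardF.
apply: (t_design_of_transitive (P0 := triple0 m w)).
  exists (supp v); last by rewrite -/(wt v) wt_v ltnW.
  by rewrite inE; apply/existsP; exists v; rewrite v_code wt_v !eqxx.
move=> P; exact (Bk_move_triple m_ge2 cardF k w_notGFq).
Qed.
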